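(* Let $K\ge 2$, let $(\mathbf{x},\mathbf{y})$ be a training sample with one-hot label $\mathbf{y}$ whose ground-truth index is $g$ ($y_g=1$, $y_k=0$ for $k\neq g$), and let $\mathbf{o}=\mathcal{F}_\Theta(\mathbf{x})\in\mathbb{R}^K$ be the network's logits. Let $\mathcal{L}$ be any one of the three evidential losses $\mathcal{L}^{\mathrm{MSE}},\mathcal{L}^{\mathrm{CE}},\mathcal{L}^{\mathrm{Log}}$ defined in the context. (i) If $\mathcal{A}=\mathrm{ReLU}$ and $o_k\le 0$ for all $k$ (so that $\mathbf{e}=\mathbf{0}$, a zero-evidence sample), then $\partial\mathcal{L}/\partial o_k=0$ for every $k\in\{1,\dots,K\}$; consequently the gradient of $\mathcal{L}(\mathbf{x},\mathbf{y})$ with respect to the network parameters, $\partial\mathcal{L}/\partial\Theta=\sum_k(\partial\mathcal{L}/\partial o_k)(\partial o_k/\partial\Theta)$, is zero. (ii) If $\mathcal{A}=\mathrm{SoftPlus}$ or $\mathcal{A}=\exp$, then as the evidence tends to zero, i.e. as $o_k\to-\infty$ for all $k$, one has $\partial\mathcal{L}/\partial o_k\to 0$ for every $k$; consequently, whenever $\partial o_k/\partial\Theta$ remains bounded, the gradient of $\mathcal{L}(\mathbf{x},\mathbf{y})$ with respect to $\Theta$ tends to zero.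
   Context: Evidential classification model for $K$ classes: a neural network $\mathcal{F}_\Theta$ outputs logits $\mathbf{o}=\mathcal{F}_\Theta(\mathbf{x})\in\mathbb{R}^K$; a non-negative activation $\mathcal{A}$ applied componentwise gives the evidence $\mathbf{e}=\mathcal{A}(\mathbf{o})$, with $\mathcal{A}\in\{\mathrm{ReLU},\mathrm{SoftPlus},\exp\}$, where $\mathrm{ReLU}(t)=\max(0,t)$ (with derivative taken to be $1$ if $t>0$ and $0$ if $t\le 0$), $\mathrm{SoftPlus}(t)=\log(1+e^t)$. Dirichlet parameters $\boldsymbol\alpha=\mathbf{e}+\mathbf{1}$, Dirichlet strength $S=\sum_{k=1}^K\alpha_k=K+\sum_k e_k$. The evidential losses are $\mathcal{L}^{\mathrm{MSE}}(\mathbf{x},\mathbf{y})=\sum_{j=1}^K\big(y_j-\alpha_j/S\big)^2+\frac{\alpha_j(S-\alpha_j)}{S^2(S+1)}$, $\mathcal{L}^{\mathrm{CE}}(\mathbf{x},\mathbf{y})=\sum_{k=1}^K y_k\big(\Psi(S)-\Psi(\alpha_k)\big)$ with $\Psi$ the digamma function, $\mathcal{L}^{\mathrm{Log}}(\mathbf{x},\mathbf{y})=\sum_{k=1}^K y_k\big(\log S-\log\alpha_k\big)$. A zero-evidence sample is one for which the model outputs $e_k=0$ for all classes $k$. *)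

From Stdlib Require Import Reals Lra Arith.
From Coquelicot Require Import Coquelicot.
Open Scope R_scope.

(* Vectors of R^K are represented as functions nat -> R; only indices k < K matter. *)

Fixpoint fsum (n : nat) (f : nat -> R) : R :=
  match n with
  | O => 0
  | S m => fsum m f + f m
  end.

Definition upd (v : nat -> R) (k : nat) (t : R) : nat -> R :=
  fun j => if Nat.eqb j k then t else v j.

Definition euler_gamma : R :=
  real (Lim_seq (fun n => fsum n (fun i => / INR (S i)) - ln (INR n))).

Definition digamma (x : R) : R :=
  - euler_gamma + Series (fun n => / (INR n + 1) - / (INR n + x)).

(* Activations and their derivatives (ReLU' taken to be 1 if t > 0, 0 if t <= 0). *)
Inductive activation := ReLU | SoftPlus | ExpAct.

Definition relu (t : R) : R := Rmax 0 t.
Definition softplus (t : R) : R := ln (1 + exp t).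

Definition act (A : activation) (t : R) : R :=
  match A with
  | ReLU => relu t
  | SoftPlus => softplus t
  | ExpAct => exp t
  end.

Definition relu_deriv (t : R) : R := if Rlt_dec 0 t then 1 else 0.

Definition alpha_of (A : activation) (o : nat -> R) : nat -> R :=
  fun k => act A (o k) + 1.

Definition strength (K : nat) (alpha : nat -> R) : R := fsum K alpha.

Definition loss_MSE (K : nat) (y alpha : nat -> R) : R :=
  let S := strength K alpha in
  fsum K (fun j => (y j - alpha j / S) ^ 2
                   + alpha j * (S - alpha j) / (S ^ 2 * (S + 1))).

Definition loss_CE (K : nat) (y alpha : nat -> R) : R :=
  let S := strength K alpha in
  fsum K (fun k => y k * (digamma S - digamma (alpha k))).

Definition loss_Log (K : nat) (y alpha : nat -> R) : R :=
  let S := strength K alpha in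
  fsum K (fun k => y k * (ln S - ln (alpha k))).

Inductive loss_kind := LMSE | LCE | LLog.

Definition loss (L : loss_kind) (K : nat) (y alpha : nat -> R) : R :=
  match L with
  | LMSE => loss_MSE K y alpha
  | LCE => loss_CE K y alpha
  | LLog => loss_Log K y alpha
  end.

Definition onehot (g : nat) : nat -> R :=
  fun k => if Nat.eqb k g then 1 else 0.

Definition loss_of_logits (L : loss_kind) (A : activation) (K : nat) (y o : nat -> R) : R :=
  loss L K y (alpha_of A o).

Definition dloss_dalpha (L : loss_kind) (K : nat) (y alpha : nat -> R) (k : nat) : R :=
  Derive (fun t => loss L K y (upd alpha k t)) (alpha k).

Definition dloss_dlogit_relu (L : loss_kind) (K : nat) (y o : nat -> R) (k : nat) : R :=
  dloss_dalpha L K y (alpha_of ReLU o) k * relu_deriv (o k).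

Definition dloss_dlogit (L : loss_kind) (A : activation) (K : nat) (y o : nat -> R) (k : nat) : R :=
  Derive (fun t => loss_of_logits L A K y (upd o k t)) (o k).

(** Part (i) is immediate: with ReLU the chain-rule factor [ReLU'(o_k)] is [0]
    on non-positive logits, so every [dL/do_k] and every parameter gradient is 0.

    Part (ii) avoids computing derivatives of the losses altogether.  Once all
    logits are below [M <= -1], every Dirichlet parameter [alpha_j = A(o_j) + 1]
    lies in [[1, 2]].  On that box each loss is Lipschitz in [alpha_k] with a
    constant [C] independent of the other parameters (it is built by sums,
    products, powers and compositions with [inv], [ln] and [digamma], all
    Lipschitz on [[1, +oo)]), while [A = SoftPlus] or [exp] is
    [exp (M + 1)]-Lipschitz near [o_k].  Hence every difference quotient of
    [o_k |-> L], and therefore its [Derive], is at most [C exp (M + 1)], which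
    tends to 0.  The file develops: finite sums and a difference-quotient bound
    for [Derive]; Lipschitz estimates for the elementary functions, the
    activations and [digamma]; a closure calculus for uniformly bounded
    Lipschitz families; the resulting per-coordinate gradient bound; and the
    chain rule with a bounded Jacobian, from which the theorem follows. *)

From Stdlib Require Import Reals Lra Arith Lia FunctionalExtensionality.
From Coquelicot Require Import Coquelicot.
Open Scope R_scope.

Lemma fsum_zero (n : nat) (f : nat -> R) :
  (forall i, (i < n)%nat -> f i = 0) -> fsum n f = 0.
Proof.
  induction n as [|n IH]; intros Hf; cbn [fsum]; [reflexivity|].
  rewrite IH by (intros; apply Hf; lia). rewrite Hf by lia. ring.
Qed.

Lemma fsum_abs_le (n : nat) (f : nat -> R) (c : R) :
  (forall i, (i < n)%nat -> Rabs (f i) <= c) -> Rabs (fsum n f) <= INR n * c.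
Proof.
  induction n as [|n IH]; intros Hf; cbn [fsum].
  - rewrite Rabs_R0. simpl. lra.
  - rewrite S_INR. eapply Rle_trans; [apply Rabs_triang|].
    assert (Rabs (fsum n f) <= INR n * c) by (apply IH; intros; apply Hf; lia).
    assert (Rabs (f n) <= c) by (apply Hf; lia). lra.
Qed.

Lemma fsum_ge_INR (n : nat) (f : nat -> R) :
  (forall i, (i < n)%nat -> 1 <= f i) -> INR n <= fsum n f.
Proof.
  induction n as [|n IH]; intros Hf; cbn [fsum]; [simpl; lra|].
  rewrite S_INR.
  assert (INR n <= fsum n f) by (apply IH; intros; apply Hf; lia).
  assert (1 <= f n) by (apply Hf; lia). lra.
Qed.

(** [Derive f x] is a limit of difference quotients, so a bound on those
    quotients near [x] bounds it, whether or not [f] is differentiable. *)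
Lemma Derive_abs_le (f : R -> R) (x C : R) :
  (forall h, 0 < Rabs h < 1 -> Rabs ((f (x + h) - f x) / h) <= C) ->
  Rabs (Derive f x) <= C.
Proof.
  intros Hq. unfold Derive, Lim.
  set (u := fun n => (f (x + Rbar_loc_seq 0 n) - f x) / Rbar_loc_seq 0 n).
  assert (Hu : forall n, (1 <= n)%nat -> - C <= u n <= C).
  { intros n Hn. apply Rabs_le_between. unfold u. apply Hq. simpl.
    assert (1 <= INR n) by (apply (le_INR 1); lia).
    rewrite Rplus_0_l, Rabs_pos_eq by (left; apply Rinv_0_lt_compat; lra).
    split; [apply Rinv_0_lt_compat; lra|].
    rewrite <- Rinv_1 at 2. apply Rinv_lt_contravar; lra. }
  assert (Hup : Rbar_le (Lim_seq u) (Lim_seq (fun _ => C))).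
  { apply Lim_seq_le_loc. exists 1%nat. intros n Hn. apply Hu; lia. }
  assert (Hlo : Rbar_le (Lim_seq (fun _ => - C)) (Lim_seq u)).
  { apply Lim_seq_le_loc. exists 1%nat. intros n Hn. apply Hu; lia. }
  rewrite Lim_seq_const in Hup, Hlo. fold u.
  destruct (Lim_seq u) as [l| |]; simpl in *; try contradiction.
  apply Rabs_le; lra.
Qed.

Lemma lipschitz_of_derive (f df : R -> R) (a b c : R) :
  (forall x, Rmin a b <= x <= Rmax a b -> is_derive f x (df x) /\ Rabs (df x) <= c) ->
  Rabs (f b - f a) <= c * Rabs (b - a).
Proof.
  intros Hd.
  destruct (MVT_abs f df a b) as [x [Hx Hxab]].
  { intros x Hx. apply is_derive_Reals, Hd, Hx. }
  rewrite Hx. apply Rmult_le_compat_r; [apply Rabs_pos|]. apply Hd, Hxab.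
Qed.

Lemma inv_lipschitz (u v : R) : 1 <= u -> 1 <= v -> Rabs (/ u - / v) <= 1 * Rabs (u - v).
Proof.
  intros Hu Hv. apply (lipschitz_of_derive Rinv (fun x => - / x ^ 2)).
  intros x Hx. assert (1 <= x) by (pose proof (Rmin_glb _ _ _ Hv Hu); lra). split.
  - auto_derive; [lra|]. field. lra.
  - rewrite Rabs_Ropp, Rabs_pos_eq by (left; apply Rinv_0_lt_compat; nra).
    rewrite <- Rinv_1. apply Rinv_le_contravar; nra.
Qed.

Lemma ln_lipschitz (u v : R) : 1 <= u -> 1 <= v -> Rabs (ln u - ln v) <= 1 * Rabs (u - v).
Proof.
  intros Hu Hv. apply (lipschitz_of_derive ln Rinv).
  intros x Hx. assert (1 <= x) by (pose proof (Rmin_glb _ _ _ Hv Hu); lra). split.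
  - auto_derive; [lra|]. field. lra.
  - rewrite Rabs_pos_eq by (left; apply Rinv_0_lt_compat; lra).
    rewrite <- Rinv_1. apply Rinv_le_contravar; lra.
Qed.

Lemma exp_le_compat (x y : R) : x <= y -> exp x <= exp y.
Proof. intros [Hxy | ->]; [left; apply exp_increasing, Hxy | right; reflexivity]. Qed.

(** Both smooth activations have derivative at most [exp t]; hence they are
    [exp (max u v)]-Lipschitz between [u] and [v]. *)
Lemma act_lipschitz (A : activation) : A = SoftPlus \/ A = ExpAct ->
  forall u v, Rabs (act A u - act A v) <= exp (Rmax u v) * Rabs (u - v).
Proof.
  intros HA u v.
  assert (Hexp : forall x, x <= Rmax v u -> exp x <= exp (Rmax u v)).
  { intros x Hx. rewrite Rmax_comm in Hx. apply exp_le_compat, Hx. }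
  destruct HA as [-> | ->]; simpl; unfold softplus.
  - apply (lipschitz_of_derive (fun t => ln (1 + exp t)) (fun x => exp x / (1 + exp x))).
    intros x [_ Hx]. pose proof (exp_pos x). split.
    + auto_derive; [lra|]. field. lra.
    + rewrite Rabs_pos_eq by (apply Rlt_le, Rdiv_lt_0_compat; lra).
      eapply Rle_trans; [|apply Hexp; exact Hx].
      apply (Rmult_le_reg_r (1 + exp x)); [lra|].
      unfold Rdiv. rewrite Rmult_assoc, Rinv_l by lra. nra.
  - apply (lipschitz_of_derive exp exp). intros x [_ Hx]. split.
    + auto_derive; [exact I|]. ring.
    + rewrite Rabs_pos_eq by (left; apply exp_pos). apply Hexp, Hx.
Qed.

Lemma act_range (A : activation) : A = SoftPlus \/ A = ExpAct ->
  forall t, t < 0 -> 0 <= act A t <= 1.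
Proof.
  intros HA t Ht. pose proof (exp_pos t).
  assert (exp t < 1) by (rewrite <- exp_0; apply exp_increasing; exact Ht).
  destruct HA as [-> | ->]; simpl; [|lra].
  unfold softplus. split.
  - rewrite <- ln_1. apply ln_le; lra.
  - pose proof (exp_ineq1_le (ln (1 + exp t))). rewrite exp_ln in *; lra.
Qed.

(** The digamma function is Lipschitz on [[1, +oo)]: the difference of two
    digamma series is dominated termwise by the telescoping series
    [2 (1/(n+1) - 1/(n+2))]. *)

Definition telescoping_term (n : nat) : R := / (INR n + 1) - / (INR n + 2).

Lemma sum_telescoping (n : nat) : sum_n telescoping_term n = 1 - / (INR n + 2).
Proof.
  induction n as [|n IH].
  - rewrite sum_O. unfold telescoping_term. simpl. field.
  - rewrite sum_Sn, IH. unfold telescoping_term, plus. rewrite S_INR. simpl.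
    pose proof (pos_INR n). field. lra.
Qed.

Lemma ex_series_telescoping : ex_series (fun n => 2 * telescoping_term n).
Proof.
  apply (ex_series_scal_l 2 telescoping_term). exists 1.
  change (is_lim_seq (sum_n telescoping_term) 1). apply is_lim_seq_spec. intros eps.
  destruct (archimed_cor1 eps (cond_pos eps)) as [N [HN HN0]].
  exists N. intros n Hn. rewrite sum_telescoping.
  assert (0 < INR N) by (apply lt_0_INR; lia).
  assert (INR N <= INR n) by (apply le_INR; lia).
  replace (1 - / (INR n + 2) - 1) with (- / (INR n + 2)) by ring.
  rewrite Rabs_Ropp, Rabs_pos_eq by (left; apply Rinv_0_lt_compat; lra).
  apply Rle_lt_trans with (/ INR N); [apply Rinv_le_contravar; lra | exact HN].
Qed.

Lemma inv_shift_diff_le (N u v : R) : 0 <= N -> 1 <= u -> 1 <= v ->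
  Rabs (/ (N + v) - / (N + u)) <= Rabs (u - v) * (2 * (/ (N + 1) - / (N + 2))).
Proof.
  intros HN Hu Hv.
  replace (/ (N + v) - / (N + u)) with ((u - v) * / ((N + u) * (N + v))) by (field; lra).
  rewrite Rabs_mult. apply Rmult_le_compat_l; [apply Rabs_pos|].
  rewrite Rabs_pos_eq by (left; apply Rinv_0_lt_compat; nra).
  replace (2 * (/ (N + 1) - / (N + 2))) with (/ ((N + 1) * (N + 2) / 2)) by (field; lra).
  apply Rinv_le_contravar; nra.
Qed.

Definition digamma_term (x : R) (n : nat) : R := / (INR n + 1) - / (INR n + x).

Lemma digamma_term_diff_le (u v : R) (n : nat) : 1 <= u -> 1 <= v ->
  Rabs (digamma_term u n - digamma_term v n) <= Rabs (u - v) * (2 * telescoping_term n).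
Proof.
  intros Hu Hv. unfold digamma_term, telescoping_term.
  replace (/ (INR n + 1) - / (INR n + u) - (/ (INR n + 1) - / (INR n + v)))
    with (/ (INR n + v) - / (INR n + u)) by ring.
  apply inv_shift_diff_le; [apply pos_INR | exact Hu | exact Hv].
Qed.

Lemma ex_series_digamma_term (x : R) : 1 <= x -> ex_series (digamma_term x).
Proof.
  intros Hx. apply (ex_series_le (V := R_CompleteNormedModule) _
    (fun n => Rabs (x - 1) * (2 * telescoping_term n))).
  - intros n. change norm with Rabs.
    replace (digamma_term x n) with (digamma_term x n - digamma_term 1 n)
      by (unfold digamma_term; ring).
    apply digamma_term_diff_le; lra.
  - apply (ex_series_scal_l (Rabs (x - 1)) (fun n => 2 * telescoping_term n)), ex_series_telescoping.
Qed.

Definition digamma_lipschitz_constant : R := Series (fun n => 2 * telescoping_term n).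

Lemma digamma_lipschitz (u v : R) : 1 <= u -> 1 <= v ->
  Rabs (digamma u - digamma v) <= digamma_lipschitz_constant * Rabs (u - v).
Proof.
  intros Hu Hv. unfold digamma, digamma_lipschitz_constant.
  fold (digamma_term u) (digamma_term v).
  replace (- euler_gamma + Series (digamma_term u) - (- euler_gamma + Series (digamma_term v)))
    with (Series (digamma_term u) - Series (digamma_term v)) by ring.
  rewrite <- Series_minus by (apply ex_series_digamma_term; lra).
  set (d := fun n => digamma_term u n - digamma_term v n).
  set (b := fun n => Rabs (u - v) * (2 * telescoping_term n)).
  assert (Hdb : forall n, Rabs (d n) <= b n) by (intros; apply digamma_term_diff_le; lra).
  assert (Hb : ex_series b)
    by apply (ex_series_scal_l (Rabs (u - v)) (fun n => 2 * telescoping_term n)), ex_series_telescoping.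
  assert (Hd : ex_series (fun n => Rabs (d n))).
  { apply (ex_series_le (V := R_CompleteNormedModule) _ b); [|exact Hb].
    intros n. change norm with Rabs. rewrite Rabs_Rabsolu. apply Hdb. }
  eapply Rle_trans; [apply Series_Rabs, Hd|].
  eapply Rle_trans; [apply Series_le; [intros n; split; [apply Rabs_pos | apply Hdb] | exact Hb]|].
  unfold b. rewrite Series_scal_l. right; ring.
Qed.

Lemma digamma_lipschitz_constant_nonneg : 0 <= digamma_lipschitz_constant.
Proof.
  pose proof (digamma_lipschitz 2 1 ltac:(lra) ltac:(lra)) as Hd.
  rewrite (Rabs_pos_eq (2 - 1)) in Hd by lra.
  pose proof (Rabs_pos (digamma 2 - digamma 1)). lra.
Qed.

Definition bounded_lipschitz {T : Type} (P : T -> Prop) (I : R -> Prop)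
    (f : T -> R -> R) : Prop :=
  exists B C, 0 <= B /\ 0 <= C /\ forall a t s, P a -> I t -> I s ->
    Rabs (f a t) <= B /\ Rabs (f a t - f a s) <= C * Rabs (t - s).

Section BoundedLipschitz.
Context {T : Type} {P : T -> Prop} {I : R -> Prop}.
Notation bounded_lipschitz := (bounded_lipschitz P I).

Lemma bl_const (c : T -> R) (B : R) :
  (forall a, P a -> Rabs (c a) <= B) -> bounded_lipschitz (fun a _ => c a).
Proof.
  intros Hc. exists (Rabs B), 0. split; [apply Rabs_pos | split; [lra|]].
  intros a t s Ha _ _. split.
  - eapply Rle_trans; [apply Hc, Ha | apply RRle_abs].
  - unfold Rminus. rewrite Rplus_opp_r, Rabs_R0. lra.
Qed.

Lemma bl_id (r : R) : (forall t, I t -> Rabs t <= r) -> bounded_lipschitz (fun _ t => t).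
Proof.
  intros Hr. exists (Rabs r), 1. split; [apply Rabs_pos | split; [lra|]].
  intros a t s _ Ht _. split; [|lra].
  eapply Rle_trans; [apply Hr, Ht | apply RRle_abs].
Qed.

Lemma bl_plus (f g : T -> R -> R) :
  bounded_lipschitz f -> bounded_lipschitz g -> bounded_lipschitz (fun a t => f a t + g a t).
Proof.
  intros [B1 [C1 [HB1 [HC1 Hf]]]] [B2 [C2 [HB2 [HC2 Hg]]]].
  exists (B1 + B2), (C1 + C2). split; [lra | split; [lra|]].
  intros a t s Ha Ht Hs.
  destruct (Hf a t s Ha Ht Hs) as [Bf Lf], (Hg a t s Ha Ht Hs) as [Bg Lg]. split.
  - eapply Rle_trans; [apply Rabs_triang | lra].
  - replace (f a t + g a t - (f a s + g a s)) with ((f a t - f a s) + (g a t - g a s)) by ring.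
    eapply Rle_trans; [apply Rabs_triang | lra].
Qed.

Lemma bl_opp (f : T -> R -> R) :
  bounded_lipschitz f -> bounded_lipschitz (fun a t => - f a t).
Proof.
  intros [B [C [HB [HC Hf]]]]. exists B, C. split; [exact HB | split; [exact HC|]].
  intros a t s Ha Ht Hs. destruct (Hf a t s Ha Ht Hs) as [Bf Lf].
  rewrite Rabs_Ropp. split; [exact Bf|].
  replace (- f a t - - f a s) with (- (f a t - f a s)) by ring.
  rewrite Rabs_Ropp. exact Lf.
Qed.

Lemma bl_minus (f g : T -> R -> R) :
  bounded_lipschitz f -> bounded_lipschitz g -> bounded_lipschitz (fun a t => f a t - g a t).
Proof. intros Hf Hg. apply bl_plus; [exact Hf | apply bl_opp, Hg]. Qed.

Lemma bl_mult (f g : T -> R -> R) :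
  bounded_lipschitz f -> bounded_lipschitz g -> bounded_lipschitz (fun a t => f a t * g a t).
Proof.
  intros [B1 [C1 [HB1 [HC1 Hf]]]] [B2 [C2 [HB2 [HC2 Hg]]]].
  exists (B1 * B2), (B1 * C2 + B2 * C1). split; [nra | split; [nra|]].
  intros a t s Ha Ht Hs.
  destruct (Hf a t s Ha Ht Hs) as [Bf Lf], (Hg a t s Ha Ht Hs) as [Bg Lg].
  destruct (Hg a s s Ha Hs Hs) as [Bgs _].
  assert (0 <= Rabs (t - s)) by apply Rabs_pos. split.
  - rewrite Rabs_mult. apply Rmult_le_compat; auto using Rabs_pos.
  - replace (f a t * g a t - f a s * g a s)
      with (f a t * (g a t - g a s) + g a s * (f a t - f a s)) by ring.
    eapply Rle_trans; [apply Rabs_triang|]. rewrite !Rabs_mult.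
    assert (Rabs (f a t) * Rabs (g a t - g a s) <= B1 * (C2 * Rabs (t - s)))
      by (apply Rmult_le_compat; auto using Rabs_pos).
    assert (Rabs (g a s) * Rabs (f a t - f a s) <= B2 * (C1 * Rabs (t - s)))
      by (apply Rmult_le_compat; auto using Rabs_pos).
    lra.
Qed.

Lemma bl_pow (f : T -> R -> R) (n : nat) :
  bounded_lipschitz f -> bounded_lipschitz (fun a t => f a t ^ n).
Proof.
  intros Hf. induction n as [|n IH].
  - apply (bl_const (fun _ => 1) 1). intros. rewrite Rabs_R1. lra.
  - apply (bl_mult f (fun a t => f a t ^ n)); assumption.
Qed.

Lemma bl_comp (phi : R -> R) (m Lphi : R) (f : T -> R -> R) : 0 <= Lphi ->
  (forall u v, m <= u -> m <= v -> Rabs (phi u - phi v) <= Lphi * Rabs (u - v)) ->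
  (forall a t, P a -> I t -> m <= f a t) ->
  bounded_lipschitz f -> bounded_lipschitz (fun a t => phi (f a t)).
Proof.
  intros HL Hphi Hm [B [C [HB [HC Hf]]]].
  exists (Lphi * (B + Rabs m) + Rabs (phi m)), (Lphi * C).
  pose proof (Rabs_pos m). pose proof (Rabs_pos (phi m)).
  split; [nra | split; [nra|]].
  intros a t s Ha Ht Hs. destruct (Hf a t s Ha Ht Hs) as [Bf Lf]. split.
  - replace (phi (f a t)) with ((phi (f a t) - phi m) + phi m) by ring.
    eapply Rle_trans; [apply Rabs_triang|]. apply Rplus_le_compat_r.
    eapply Rle_trans; [apply Hphi; [apply Hm; assumption | lra]|].
    apply Rmult_le_compat_l; [exact HL|].
    eapply Rle_trans; [apply Rabs_triang|]. rewrite Rabs_Ropp. lra.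
  - eapply Rle_trans; [apply Hphi; apply Hm; assumption|].
    rewrite Rmult_assoc. apply Rmult_le_compat_l; [exact HL | exact Lf].
Qed.

Lemma bl_fsum (n : nat) (F : nat -> T -> R -> R) :
  (forall i, (i < n)%nat -> bounded_lipschitz (F i)) ->
  bounded_lipschitz (fun a t => fsum n (fun i => F i a t)).
Proof.
  induction n as [|n IH]; intros HF; cbn [fsum].
  - apply (bl_const (fun _ => 0) 0). intros. rewrite Rabs_R0. lra.
  - apply bl_plus; [apply IH; intros; apply HF; lia | apply HF; lia].
Qed.

End BoundedLipschitz.

(** Each evidential loss, as a function of one Dirichlet parameter [alpha_k]
    ranging in [[1, 2]] while the others stay in [[1, 2]], is bounded and
    Lipschitz, uniformly in the other parameters.  (All parameters are at least
    1, so the strength is at least 1 and [inv], [ln], [digamma] are Lipschitz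
    on the values that occur.) *)

Definition dirichlet_box (K : nat) (alpha : nat -> R) : Prop :=
  forall j, (j < K)%nat -> 1 <= alpha j <= 2.

Definition param_range (t : R) : Prop := 1 <= t <= 2.

Section LossLipschitz.
Variables (K k : nat) (y : nat -> R).
Hypothesis Hk : (k < K)%nat.

Notation BL := (bounded_lipschitz (dirichlet_box K) param_range).

Lemma upd_ge1 (alpha : nat -> R) (t : R) (j : nat) :
  dirichlet_box K alpha -> param_range t -> (j < K)%nat -> 1 <= upd alpha k t j.
Proof.
  intros Ha Ht Hj. unfold upd. destruct (Nat.eqb j k); [apply Ht | apply Ha, Hj].
Qed.

Lemma bl_coord (j : nat) : (j < K)%nat -> BL (fun alpha t => upd alpha k t j).
Proof.
  intros Hj. unfold upd. destruct (Nat.eqb j k).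
  - apply (bl_id 2). intros t Ht. unfold param_range in Ht.
    rewrite Rabs_pos_eq; lra.
  - apply (bl_const (fun alpha => alpha j) 2). intros alpha Ha.
    destruct (Ha j Hj). rewrite Rabs_pos_eq; lra.
Qed.

Lemma strength_ge1 (alpha : nat -> R) (t : R) :
  dirichlet_box K alpha -> param_range t -> 1 <= strength K (upd alpha k t).
Proof.
  intros Ha Ht. unfold strength.
  eapply Rle_trans; [|apply fsum_ge_INR; intros; apply upd_ge1; assumption].
  apply (le_INR 1). lia.
Qed.

Lemma bl_strength : BL (fun alpha t => strength K (upd alpha k t)).
Proof.
  apply (bl_fsum K (fun j alpha t => upd alpha k t j)). exact bl_coord.
Qed.

Lemma bl_inv_ln_digamma (phi : R -> R) (f : (nat -> R) -> R -> R) :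
  phi = Rinv \/ phi = ln \/ phi = digamma ->
  (forall alpha t, dirichlet_box K alpha -> param_range t -> 1 <= f alpha t) ->
  BL f -> BL (fun alpha t => phi (f alpha t)).
Proof.
  intros [-> | [-> | ->]].
  - apply (bl_comp Rinv 1 1); [lra | apply inv_lipschitz].
  - apply (bl_comp ln 1 1); [lra | apply ln_lipschitz].
  - apply (bl_comp digamma 1 digamma_lipschitz_constant);
      [apply digamma_lipschitz_constant_nonneg | apply digamma_lipschitz].
Qed.

Lemma bl_loss (L : loss_kind) : BL (fun alpha t => loss L K y (upd alpha k t)).
Proof.
  pose proof bl_strength as HS.
  assert (HS1 := strength_ge1).
  assert (Hy : forall j, BL (fun _ _ => y j))
    by (intros j; apply (bl_const (fun _ => y j) (Rabs (y j))); intros; lra).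
  destruct L; unfold loss, loss_MSE, loss_CE, loss_Log; cbv zeta;
    apply (bl_fsum K); intros j Hj; pose proof (bl_coord j Hj) as Hc.
  - unfold Rdiv. apply bl_plus.
    + apply bl_pow, bl_minus; [apply Hy|].
      apply bl_mult; [exact Hc|]. apply bl_inv_ln_digamma; auto.
    + apply bl_mult; [apply bl_mult; [exact Hc | apply bl_minus; assumption]|].
      apply bl_inv_ln_digamma; [auto | |].
      * intros alpha t Ha Ht. pose proof (HS1 alpha t Ha Ht). simpl. nra.
      * apply bl_mult; [apply bl_pow; exact HS|]. apply bl_plus; [exact HS|].
        apply (bl_const (fun _ => 1) 1). intros. rewrite Rabs_R1. lra.
  - apply bl_mult; [apply Hy|].
    apply bl_minus; apply bl_inv_ln_digamma; auto; intros; apply upd_ge1; assumption.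
  - apply bl_mult; [apply Hy|].
    apply bl_minus; apply bl_inv_ln_digamma; auto; intros; apply upd_ge1; assumption.
Qed.

End LossLipschitz.

(** All logits [o_0, ..., o_(K-1)] are below the threshold [M]; "as [o -> -oo]"
    means "for all [o] with [logits_below K M o], for [M] small enough". *)
Definition logits_below (K : nat) (M : R) (o : nat -> R) : Prop :=
  forall j, (j < K)%nat -> o j < M.

Lemma logits_below_min_l (K : nat) (M1 M2 : R) (o : nat -> R) :
  logits_below K (Rmin M1 M2) o -> logits_below K M1 o.
Proof. intros Ho j Hj. pose proof (Ho j Hj). pose proof (Rmin_l M1 M2). lra. Qed.

Lemma logits_below_min_r (K : nat) (M1 M2 : R) (o : nat -> R) :
  logits_below K (Rmin M1 M2) o -> logits_below K M2 o.
Proof. intros Ho j Hj. pose proof (Ho j Hj). pose proof (Rmin_r M1 M2). lra. Qed.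

Lemma alpha_of_upd (A : activation) (o : nat -> R) (k : nat) (t : R) :
  alpha_of A (upd o k t) = upd (alpha_of A o) k (act A t + 1).
Proof.
  extensionality j. unfold alpha_of, upd. destruct (Nat.eqb j k); reflexivity.
Qed.

(** Gradient bound: if every logit is below [M <= -1], then [|dL/do_k|] is at
    most [C exp (M + 1)], where [C] is the Lipschitz constant of the loss in
    [alpha_k]; indeed [alpha_k - 1 = A(o_k)] moves by at most [exp (M + 1)]
    times the change of [o_k] for perturbations of size [< 1]. *)
Lemma dloss_dlogit_exp_bound (L : loss_kind) (A : activation) (K k : nat) (y : nat -> R) :
  A = SoftPlus \/ A = ExpAct -> (k < K)%nat ->
  exists C, 0 <= C /\ forall (o : nat -> R) (M : R), M <= -1 ->
    logits_below K M o -> Rabs (dloss_dlogit L A K y o k) <= C * exp (M + 1).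
Proof.
  intros HA Hk. destruct (bl_loss K k y Hk L) as [B [C [_ [HC Hlip]]]].
  exists C. split; [exact HC|]. intros o M HM Ho.
  assert (Hbox : dirichlet_box K (alpha_of A o)).
  { intros j Hj. unfold alpha_of.
    pose proof (act_range A HA (o j) ltac:(specialize (Ho j Hj); lra)). lra. }
  assert (Hok : o k < M) by (apply Ho, Hk).
  apply Derive_abs_le. intros h [Hh0 Hh1].
  unfold loss_of_logits. rewrite !alpha_of_upd.
  assert (Hh : - 1 < h < 1) by (apply Rabs_def2 in Hh1; lra).
  pose proof (act_range A HA (o k + h) ltac:(lra)).
  pose proof (act_range A HA (o k) ltac:(lra)).
  destruct (Hlip (alpha_of A o) (act A (o k + h) + 1) (act A (o k) + 1) Hbox)
    as [_ Hloss]; unfold param_range; try lra.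
  replace (act A (o k + h) + 1 - (act A (o k) + 1)) with (act A (o k + h) - act A (o k))
    in Hloss by ring.
  pose proof (act_lipschitz A HA (o k + h) (o k)) as Hact.
  replace (o k + h - o k) with h in Hact by ring.
  assert (Hmax : exp (Rmax (o k + h) (o k)) <= exp (M + 1)).
  { apply exp_le_compat, Rmax_lub; lra. }
  unfold Rdiv. rewrite Rabs_mult, Rabs_inv.
  apply (Rmult_le_reg_r (Rabs h)); [exact Hh0|].
  rewrite Rmult_assoc, Rinv_l, Rmult_1_r by lra.
  eapply Rle_trans; [exact Hloss|]. rewrite Rmult_assoc.
  apply Rmult_le_compat_l; [exact HC|].
  eapply Rle_trans; [exact Hact|].
  apply Rmult_le_compat_r; [apply Rabs_pos | exact Hmax].
Qed.

Lemma dloss_dlogit_vanishes (L : loss_kind) (A : activation) (K k : nat) (y : nat -> R) :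
  A = SoftPlus \/ A = ExpAct -> (k < K)%nat ->
  forall eps, 0 < eps -> exists M, forall o : nat -> R,
    logits_below K M o -> Rabs (dloss_dlogit L A K y o k) < eps.
Proof.
  intros HA Hk eps Heps.
  destruct (dloss_dlogit_exp_bound L A K k y HA Hk) as [C [HC Hbound]].
  assert (Hq : 0 < eps / (C + 1)) by (apply Rdiv_lt_0_compat; lra).
  set (M := Rmin (-1) (ln (eps / (C + 1)) - 1)).
  assert (HM : M <= -1) by apply Rmin_l.
  assert (Hexp : exp (M + 1) <= eps / (C + 1)).
  { rewrite <- (exp_ln (eps / (C + 1))) by exact Hq.
    apply exp_le_compat. unfold M. pose proof (Rmin_r (-1) (ln (eps / (C + 1)) - 1)). lra. }
  exists M. intros o Ho.
  eapply Rle_lt_trans; [exact (Hbound o M HM Ho)|].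
  apply Rle_lt_trans with (C * (eps / (C + 1))); [apply Rmult_le_compat_l; assumption|].
  apply (Rmult_lt_reg_r (C + 1)); [lra|].
  unfold Rdiv. rewrite Rmult_assoc, (Rmult_assoc eps), Rinv_l by lra. nra.
Qed.

Lemma below_threshold_all (K n : nat) (Q : nat -> (nat -> R) -> Prop) :
  (forall k, (k < n)%nat -> exists M, forall o : nat -> R,
     logits_below K M o -> Q k o) ->
  exists M, forall o : nat -> R, logits_below K M o -> forall k, (k < n)%nat -> Q k o.
Proof.
  induction n as [|n IH]; intros HQ.
  - exists 0. intros o _ k Hk. lia.
  - destruct IH as [M1 H1]; [intros k Hk; apply HQ; lia|].
    destruct (HQ n (Nat.lt_succ_diag_r n)) as [M2 H2].
    exists (Rmin M1 M2). intros o Ho k Hk.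
    destruct (Nat.eq_dec k n) as [-> | Hne].
    + apply H2. exact (logits_below_min_r K M1 M2 o Ho).
    + apply H1; [exact (logits_below_min_l K M1 M2 o Ho) | lia].
Qed.

Lemma dloss_dlogit_relu_zero (L : loss_kind) (K : nat) (y o : nat -> R) (k : nat) :
  o k <= 0 -> dloss_dlogit_relu L K y o k = 0.
Proof.
  intros Hok. unfold dloss_dlogit_relu, relu_deriv.
  destruct (Rlt_dec 0 (o k)); [lra | ring].
Qed.

Lemma chain_rule_sum_vanishes (K : nat) (d J : (nat -> R) -> nat -> R) (B : R) :
  (forall k, (k < K)%nat -> forall eps, 0 < eps -> exists M, forall o : nat -> R,
     logits_below K M o -> Rabs (d o k) < eps) ->
  (exists M0, forall o k, logits_below K M0 o -> Rabs (J o k) <= B) ->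
  forall eps, 0 < eps -> exists M, forall o : nat -> R,
    logits_below K M o -> Rabs (fsum K (fun k => d o k * J o k)) < eps.
Proof.
  intros Hd [M0 HJ] eps Heps.
  set (c := Rabs B + 1). assert (Hc : 0 < c) by (pose proof (Rabs_pos B); unfold c; lra).
  set (eta := eps / (INR K * c + 1)).
  assert (Heta : 0 < eta) by (apply Rdiv_lt_0_compat; [|pose proof (pos_INR K)]; nra).
  destruct (below_threshold_all K K (fun k o => Rabs (d o k) < eta)) as [M HM].
  { intros k Hk. apply Hd; assumption. }
  exists (Rmin M M0). intros o Ho.
  pose proof (logits_below_min_l K M M0 o Ho) as HoM.
  pose proof (logits_below_min_r K M M0 o Ho) as HoM0.
  eapply Rle_lt_trans; [apply (fsum_abs_le K _ (eta * c))|].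
  - intros k Hk. rewrite Rabs_mult. apply Rmult_le_compat; try apply Rabs_pos.
    + left. apply HM; assumption.
    + pose proof (HJ o k HoM0). pose proof (RRle_abs B). unfold c. lra.
  - unfold eta. pose proof (pos_INR K).
    apply (Rmult_lt_reg_r (INR K * c + 1)); [nra|].
    replace (INR K * (eps / (INR K * c + 1) * c) * (INR K * c + 1))
      with (eps * (INR K * c)) by (field; nra).
    nra.
Qed.

Theorem theorem1 :
  forall (K g : nat), (2 <= K)%nat -> (g < K)%nat ->
  forall (L : loss_kind),
  (* (i) ReLU, zero-evidence sample *)
  (forall o : nat -> R, (forall k, (k < K)%nat -> o k <= 0) ->
     (forall k, (k < K)%nat -> dloss_dlogit_relu L K (onehot g) o k = 0) /\
     (forall (J : nat -> nat -> R) (p : nat),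
        (* J k p = d o_k / d theta_p *)
        fsum K (fun k => dloss_dlogit_relu L K (onehot g) o k * J k p) = 0))
  /\
  (* (ii) SoftPlus or exp: limit as o_k -> -oo for all k *)
  (forall A : activation, A = SoftPlus \/ A = ExpAct ->
     (forall k, (k < K)%nat ->
        forall eps : R, 0 < eps -> exists M : R, forall o : nat -> R,
          (forall j, (j < K)%nat -> o j < M) ->
          Rabs (dloss_dlogit L A K (onehot g) o k) < eps) /\
     (forall (J : (nat -> R) -> nat -> nat -> R) (B : R),
        (* d o_k / d theta_p stays bounded (eventually, as o -> -oo) *)
        (exists M0 : R, forall o k p, (forall j, (j < K)%nat -> o j < M0) ->
           Rabs (J o k p) <= B) ->
        forall (p : nat) (eps : R), 0 < eps -> exists M : R, forall o : nat -> R,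
          (forall j, (j < K)%nat -> o j < M) ->
          Rabs (fsum K (fun k => dloss_dlogit L A K (onehot g) o k * J o k p)) < eps)).
Proof.
  intros K g _ _ L. split.
  - intros o Ho. split.
    + intros k Hk. apply dloss_dlogit_relu_zero, Ho, Hk.
    + intros J p. apply fsum_zero. intros k Hk.
      rewrite dloss_dlogit_relu_zero by (apply Ho, Hk). ring.
  - intros A HA.
    assert (Hgrad := fun k Hk => dloss_dlogit_vanishes L A K k (onehot g) HA Hk).
    split; [exact Hgrad|].
    intros J B [M0 HJ] p.
    apply (chain_rule_sum_vanishes K (dloss_dlogit L A K (onehot g)) (fun o k => J o k p) B).
    + exact Hgrad.
    + exists M0. intros o k Ho. apply HJ, Ho.
Qed.
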